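(* Let $\Phi$ be a channel matrix whose rows $P^1,\dots,P^4\in\Delta^n$ are in general position, let $Q^0$ be the equidistant point from $P^1,\dots,P^4$ with barycentric coordinate $\boldsymbol\lambda^0$, and suppose $\lambda^0_1<0$, $\lambda^0_2,\lambda^0_3,\lambda^0_4\ge0$. Let $Q^1=\pi(Q^0|L(P^2,P^3,P^4))$ with barycentric coordinate $\boldsymbol\lambda^1$ about $P^1,\dots,P^4$, and suppose $\lambda^1_2<0$, $\lambda^1_3\ge0$, $\lambda^1_4\ge0$. Let $Q^2=\pi(Q^1|L(P^3,P^4))$. Then the output distribution achieving the channel capacity is $Q^\ast=Q^2$ and the channel capacity is $C=D(P^3\|Q^2)$.
   Context: $\Delta^n=\{Q:Q_j>0,\sum_jQ_j=1\}$, $\bar\Delta^m=\{\boldsymbol\lambda:\lambda_i\ge0,\sum_i\lambda_i=1\}$; $D(Q\|Q')=\sum_jQ_j\log(Q_j/Q'_j)$. Rows are in general position if $P^2-P^1,\dots,P^m-P^1$ are linearly independent. $L(S^1,\dots,S^r)=\{\sum_i\lambda_iS^i:\sum_i\lambda_i=1\}\cap\Delta^n$; for such an affine subspace $L$, $\pi(Q'|L)$ is the unique $Q\in L$ minimizing $D(Q\|Q')$. The barycentric coordinate of $Q\in L(P^1,\dots,P^m)$ is the unique $\boldsymbol\lambda$ with $\sum_i\lambda_i=1$, $Q=\sum_i\lambda_iP^i$. The equidistant point is the unique $Q^0\in L(P^1,\dots,P^m)$ with all $D(P^i\|Q^0)$ equal. Mutual information $I(\boldsymbol\lambda,\Phi)=\sum_{i,j}\lambda_iP^i_j\log(P^i_j/Q_j)$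 with $Q=\boldsymbol\lambda\Phi$; capacity $C=\max_{\boldsymbol\lambda\in\bar\Delta^m}I(\boldsymbol\lambda,\Phi)$; the capacity-achieving output distribution is $Q^\ast=\boldsymbol\lambda^\ast\Phi$ for a maximizer $\boldsymbol\lambda^\ast$ (unique). *)

From HB Require Import structures.
From mathcomp Require Import all_boot all_order all_algebra.
From mathcomp Require Import all_classical all_reals all_analysis.
Set Implicit Arguments. Unset Strict Implicit. Unset Printing Implicit Defensive.
Import Order.TTheory GRing.Theory Num.Theory.
Local Open Scope ring_scope.
Local Open Scope classical_set_scope.

Section Defs.
Variable R : realType.

Definition in_simplex n (Q : 'rV[R]_n) : Prop :=
  (forall j, 0 < Q 0 j) /\ \sum_j Q 0 j = 1.

Definition in_csimplex m (lam : 'rV[R]_m) : Prop :=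
  (forall i, 0 <= lam 0 i) /\ \sum_i lam 0 i = 1.

Definition KL n (Q Q' : 'rV[R]_n) : R :=
  \sum_j Q 0 j * ln (Q 0 j / Q' 0 j).

Definition general_position m n (Phi : 'M[R]_(m.+1, n)) : Prop :=
  row_free (\matrix_(i < m, j < n) (Phi (lift ord0 i) j - Phi ord0 j)).

Definition affL n (S : seq 'rV[R]_n) (Q : 'rV[R]_n) : Prop :=
  (exists lam : 'I_(size S) -> R,
     \sum_i lam i = 1 /\ Q = \sum_i lam i *: S`_i) /\ in_simplex Q.

Definition rows m n (Phi : 'M[R]_(m, n)) : seq 'rV[R]_n :=
  [seq row i Phi | i <- enum 'I_m].

Definition is_proj n (L : 'rV[R]_n -> Prop) (Q' Q : 'rV[R]_n) : Prop :=
  L Q /\ forall Q'', L Q'' -> KL Q Q' <= KL Q'' Q'.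

Definition barycentric m n (Phi : 'M[R]_(m, n)) (lam : 'rV[R]_m) (Q : 'rV[R]_n)
  : Prop :=
  \sum_i lam 0 i = 1 /\ Q = \sum_i lam 0 i *: row i Phi.

Definition equidistant m n (Phi : 'M[R]_(m, n)) (Q : 'rV[R]_n) : Prop :=
  affL (rows Phi) Q /\ forall i k, KL (row i Phi) Q = KL (row k Phi) Q.

Definition mutual_info m n (lam : 'rV[R]_m) (Phi : 'M[R]_(m, n)) : R :=
  let Q := lam *m Phi in
  \sum_i \sum_j lam 0 i * Phi i j * ln (Phi i j / Q 0 j).

Definition capacity m n (Phi : 'M[R]_(m, n)) : R :=
  sup [set mutual_info lam Phi | lam in in_csimplex (m:=m)].

Definition capacity_achieving m n (Phi : 'M[R]_(m, n)) (lam : 'rV[R]_m) : Prop :=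
  in_csimplex lam /\
  forall lam', in_csimplex lam' -> mutual_info lam' Phi <= mutual_info lam Phi.

End Defs.

Definition i1 : 'I_4 := @Ordinal 4 0 erefl.
Definition i2 : 'I_4 := @Ordinal 4 1 erefl.
Definition i3 : 'I_4 := @Ordinal 4 2 erefl.
Definition i4 : 'I_4 := @Ordinal 4 3 erefl.

(* Each reverse I-projection obeys a Pythagorean identity D(P || Q') = D(P || Q) + D(Q || Q')
   for the generators P of the affine subspace, so P^3 and P^4 are equidistant from Q^2, at
   some distance C.  For Q = sum_i c_i P^i the compensation identity
   sum_i c_i D(P^i || Q') = D(Q || Q') + sum_i c_i D(P^i || Q), applied to the barycentric
   coordinates of Q^1 and of Q^0 with their negative entries, yields D(P^2 || Q^2) <= C and
   then D(P^1 || Q^2) <= C; applied on the segment [P^3, P^4] it shows that Q^2 lies between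
   P^3 and P^4.  These are the Kuhn-Tucker conditions: for every input distribution lam,
   I(lam) = sum_i lam_i D(P^i || Q^2) - D(lam Phi || Q^2) <= C, with equality forcing
   lam Phi = Q^2. *)

From HB Require Import structures.
From mathcomp Require Import all_boot all_order all_algebra.
From mathcomp Require Import all_classical all_reals all_analysis.
From mathcomp Require Import lra ring.
Import Order.TTheory GRing.Theory Num.Theory.
Local Open Scope ring_scope.
Set Implicit Arguments. Unset Strict Implicit. Unset Printing Implicit Defensive.

Section RealFacts.
Variable R : realType.

Lemma ln_le_subr1 (t : R) : 0 < t -> ln t <= t - 1.
Proof. by move=> t0; have := expR_ge1Dx (ln t); rewrite lnK ?posrE //; lra. Qed.

Lemma ln_lt_subr1 (t : R) : 0 < t -> t != 1 -> ln t < t - 1.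
Proof.
move=> t0 t1; have /expR_gt1Dx : ln t != 0 by rewrite ln_eq0.
by rewrite lnK ?posrE //; lra.
Qed.

Lemma ln_div_sym (x y : R) : 0 < x -> 0 < y -> ln (x / y) = - ln (y / x).
Proof. by move=> x0 y0; rewrite -lnV ?posrE ?divr_gt0 // invf_div. Qed.

Lemma subr_le_mul_ln_div (x y : R) : 0 < x -> 0 < y -> x - y <= x * ln (x / y).
Proof.
move=> x0 y0; have h := ln_le_subr1 (divr_gt0 y0 x0).
have e : x * (y / x - 1) = y - x by field; rewrite gt_eqF.
by rewrite ln_div_sym //; nra.
Qed.

Lemma subr_lt_mul_ln_div (x y : R) : 0 < x -> 0 < y -> x != y ->
  x - y < x * ln (x / y).
Proof.
move=> x0 y0 xy; have nx : x != 0 by rewrite gt_eqF.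
have yx1 : y / x != 1.
  by apply: contra_neq xy => e; rewrite -[RHS](divfK nx) e mul1r.
have h := ln_lt_subr1 (divr_gt0 y0 x0) yx1.
have e : x * (y / x - 1) = y - x by field; rewrite gt_eqF.
by rewrite ln_div_sym //; nra.
Qed.

Lemma finite_pos_lower_bound (I : finType) (f : I -> R) : (forall i, 0 < f i) ->
  exists2 d, 0 < d & forall i, d <= f i.
Proof.
move=> f0; suff [d d0 fd] : exists2 d, 0 < d & forall i, i \in enum I -> d <= f i.
  by exists d => // i; apply: fd; rewrite mem_enum.
elim: (enum I) => [|x s [d d0 fd]]; first by exists 1.
exists (Num.min d (f x)); first by rewrite lt_min d0 f0.
move=> i; rewrite inE => /orP [/eqP->|/fd h]; first by rewrite ge_min lexx orbT.
by rewrite ge_min h.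
Qed.

Lemma linear_coef_eq0 (a K d : R) : 0 < d -> 0 <= K ->
  (forall e, `|e| < d -> 0 <= e * a + e ^+ 2 * K) -> a = 0.
Proof.
move=> d0 K0 H; apply/eqP; apply: contraT => a_neq0.
have a0 : 0 < `|a| by rewrite normr_gt0.
(* [t] is small enough that [t^2 K < t |a|] and [t < d]. *)
pose t := Num.min (d / 2) (`|a| / (2 * (K + 1))).
have t0 : 0 < t by rewrite lt_min !divr_gt0 //; lra.
have td : t < d by rewrite gt_min; apply/orP; left; lra.
have ta : t * (2 * (K + 1)) <= `|a| by rewrite -ler_pdivlMr ?ge_min ?lexx ?orbT //; lra.
have tK : t * t * (2 * (K + 1)) <= t * `|a|.
  by rewrite -mulrA; apply: ler_wpM2l => //; exact: ltW.
case: (ltgtP a 0) => [an|ap|/eqP]; last by rewrite (negbTE a_neq0).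
- have := H t; rewrite gtr0_norm // expr2 => /(_ td).
  by rewrite ltr0_norm // in tK; nra.
- have := H (- t); rewrite normrN gtr0_norm // expr2 => /(_ td).
  by rewrite gtr0_norm // in tK; nra.
Qed.

Lemma sum_dirac m (k : 'I_m) : \sum_i ((i == k)%:R : R) = 1.
Proof. by rewrite (bigD1 k) //= eqxx big1 ?addr0 // => i /negbTE ->. Qed.

Lemma sum_diracZ (V : lmodType R) m (F : 'I_m -> V) (k : 'I_m) :
  \sum_i (i == k)%:R *: F i = F k.
Proof.
rewrite (bigD1 k) //= eqxx scale1r big1 ?addr0 // => i /negbTE ->.
by rewrite scale0r.
Qed.

End RealFacts.

Section Divergence.
Variables (R : realType) (n : nat).
Implicit Types (A B Q v : 'rV[R]_n).

Definition lratio A Q Q' := \sum_j A 0 j * ln (Q 0 j / Q' 0 j).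

Lemma KL_ge0 A B : in_simplex A -> in_simplex B -> 0 <= KL A B.
Proof.
move=> [A0 sA] [B0 sB]; have <- : \sum_j (A 0 j - B 0 j) = 0.
  by rewrite sumrB sA sB subrr.
by apply: ler_sum => j _; exact: subr_le_mul_ln_div.
Qed.

Lemma KL_le0_eq A B : in_simplex A -> in_simplex B -> KL A B <= 0 -> A = B.
Proof.
move=> [A0 sA] [B0 sB] KL_le0; apply/rowP => j; apply/eqP.
apply: contraTT KL_le0 => AB; rewrite -ltNge.
have <- : \sum_j (A 0 j - B 0 j) = 0 by rewrite sumrB sA sB subrr.
rewrite /KL (bigD1 j) // [X in _ < X](bigD1 j) //=.
apply: ltr_leD; first exact: subr_lt_mul_ln_div.
by apply: ler_sum => k _; exact: subr_le_mul_ln_div.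
Qed.

Lemma KL_self Q : KL Q Q = 0.
Proof.
rewrite /KL big1 // => j _.
have [->|Q0] := eqVneq (Q 0 j) 0; first by rewrite mul0r.
by rewrite divff // ln1 mulr0.
Qed.

Lemma KL_lratio Q Q' : KL Q Q' = lratio Q Q Q'.
Proof. by []. Qed.

Lemma KL_chain A Q Q' : in_simplex A -> in_simplex Q -> in_simplex Q' ->
  KL A Q' = KL A Q + lratio A Q Q'.
Proof.
move=> [A0 _] [Q0 _] [Q'0 _]; rewrite /KL /lratio -big_split /=.
apply: eq_bigr => j _; have := A0 j; have := Q0 j; have := Q'0 j => q' q a.
have -> : A 0 j / Q' 0 j = A 0 j / Q 0 j * (Q 0 j / Q' 0 j).
  by field; rewrite !gt_eqF.
by rewrite lnM ?posrE ?divr_gt0 // mulrDr.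
Qed.

Lemma lratio_sum m (c : 'I_m -> R) (A : 'I_m -> 'rV[R]_n) Q Q' :
  lratio (\sum_i c i *: A i) Q Q' = \sum_i c i * lratio (A i) Q Q'.
Proof.
rewrite /lratio; under eq_bigr => j _ do rewrite summxE big_distrl /=.
rewrite exchange_big /=; apply: eq_bigr => i _; rewrite big_distrr /=.
by apply: eq_bigr => j _; rewrite mxE mulrA.
Qed.

Lemma lratioB A B Q Q' : lratio (A - B) Q Q' = lratio A Q Q' - lratio B Q Q'.
Proof. by rewrite /lratio -sumrB; apply: eq_bigr => j _; rewrite !mxE mulrBl. Qed.

Lemma KL_compensation m (c : 'I_m -> R) (A : 'I_m -> 'rV[R]_n) Q Q' :
  (forall i, in_simplex (A i)) -> in_simplex Q -> in_simplex Q' ->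
  Q = \sum_i c i *: A i ->
  \sum_i c i * KL (A i) Q' = KL Q Q' + \sum_i c i * KL (A i) Q.
Proof.
move=> sA sQ sQ' QE; rewrite KL_lratio {1}QE lratio_sum -big_split /=.
by apply: eq_bigr => i _; rewrite (KL_chain (sA i) sQ sQ') mulrDr addrC.
Qed.

Lemma KL_perturb_le Q Q' v (e : R) :
  in_simplex Q -> in_simplex Q' -> in_simplex (Q + e *: v) ->
  \sum_j v 0 j = 0 ->
  KL (Q + e *: v) Q' - KL Q Q' <=
    e * lratio v Q Q' + e ^+ 2 * \sum_j (v 0 j ^+ 2 / Q 0 j).
Proof.
move=> [Q0 _] [Q'0 _] [Qe0 _] v0.
apply: (@le_trans _ _ (\sum_j (e * (v 0 j * ln (Q 0 j / Q' 0 j))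
   + e ^+ 2 * (v 0 j ^+ 2 / Q 0 j) + e * v 0 j))); last first.
  by rewrite !big_split /= -!big_distrr /= v0 mulr0 addr0.
rewrite /KL -sumrB; apply: ler_sum => j _.
have := Qe0 j; rewrite !mxE; have y0 := Q0 j; have c0 := Q'0 j.
set y := Q 0 j; set x := y + e * v 0 j => x0.
have -> : x / Q' 0 j = x / y * (y / Q' 0 j) by field; rewrite !gt_eqF.
rewrite lnM ?posrE ?divr_gt0 //.
have h1 : x * ln (x / y) <= x * (x / y - 1).
  by apply: ler_wpM2l; [exact: ltW | apply: ln_le_subr1; exact: divr_gt0].
have h2 : x * (x / y - 1) = e * v 0 j + e ^+ 2 * (v 0 j ^+ 2 / y).
  by rewrite /x; field; rewrite gt_eqF.
set L := ln (y / Q' 0 j).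
have -> : x * (ln (x / y) + L) - y * L = x * ln (x / y) + e * (v 0 j * L).
  by rewrite /x; ring.
lra.
Qed.

Lemma simplex_perturb Q v : in_simplex Q -> \sum_j v 0 j = 0 ->
  exists2 d, 0 < d & forall e, `|e| < d -> in_simplex (Q + e *: v).
Proof.
move=> [Q0 sQ] v0.
have [d d0 dQ] := @finite_pos_lower_bound R _ (fun j => Q 0 j / (`|v 0 j| + 1))
  (fun j => divr_gt0 (Q0 j) (ltr_wpDl (normr_ge0 _) ltr01)).
exists d => // e ed; split => [j|]; last first.
  under eq_bigr do rewrite !mxE.
  by rewrite big_split /= sQ -big_distrr /= v0 mulr0 addr0.
have := dQ j; rewrite ler_pdivlMr ?ltr_wpDl ?normr_ge0 // !mxE => dv.
have ev := ler_norm (- (e * v 0 j)); rewrite normrN normrM in ev.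
have : `|e| * `|v 0 j| <= d * `|v 0 j|.
  by apply: ler_wpM2r; [exact: normr_ge0 | exact: ltW].
have := normr_ge0 (v 0 j); lra.
Qed.

End Divergence.

Section Projection.
Variables (R : realType) (n : nat) (S : seq 'rV[R]_n) (Q' Q : 'rV[R]_n).
Hypotheses (sS : forall k : 'I_(size S), in_simplex S`_k) (sQ' : in_simplex Q').
Hypothesis proj : is_proj (affL S) Q' Q.

(* First-order optimality: [Q + e (S_k - S_l)] stays in [affL S] for small [|e|]. *)
Lemma proj_lratio_const (k l : 'I_(size S)) :
  lratio S`_k Q Q' = lratio S`_l Q Q'.
Proof.
have [[[lam [lam1 QE]] sQ] Qmin] := proj.
pose v := S`_k - S`_l.
have v0 : \sum_j v 0 j = 0.
  by under eq_bigr do rewrite !mxE; rewrite sumrB (sS k).2 (sS l).2 subrr.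
apply/eqP; rewrite -subr_eq0 -lratioB -/v; apply/eqP.
have [d d0 sQe] := simplex_perturb sQ v0.
apply: (linear_coef_eq0 d0 (K := \sum_j (v 0 j ^+ 2 / Q 0 j))).
  by apply: sumr_ge0 => j _; rewrite divr_ge0 ?sqr_ge0 ?ltW ?sQ.1.
move=> e /sQe sQe_in.
have Qe_in : affL S (Q + e *: v).
  split => //; exists (fun i => lam i + e * ((i == k)%:R - (i == l)%:R)); split.
    by rewrite big_split /= lam1 -big_distrr /= sumrB !sum_dirac subrr mulr0 addr0.
  under eq_bigr do rewrite scalerDl -scalerA scalerBl.
  by rewrite big_split /= -QE -scaler_sumr sumrB !sum_diracZ.
have := Qmin _ Qe_in; have := KL_perturb_le sQ sQ' sQe_in v0.
by rewrite mulrC [e ^+ 2 * _]mulrC; lra.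
Qed.

Lemma proj_lratio (k : 'I_(size S)) : lratio S`_k Q Q' = KL Q Q'.
Proof.
have [[[lam [lam1 QE]] _] _] := proj.
rewrite KL_lratio {2}QE lratio_sum.
under eq_bigr do rewrite (proj_lratio_const _ k).
by rewrite -big_distrl /= lam1 mul1r.
Qed.

Lemma proj_pythagoras A : A \in S ->
  KL A Q' = KL A Q + KL Q Q'.
Proof.
move=> /(nthP 0) [k kS <-]; have [[_ sQ] _] := proj.
have sA : in_simplex S`_k := sS (Ordinal kS).
by rewrite (KL_chain sA sQ sQ') -(proj_lratio (Ordinal kS)).
Qed.

End Projection.

Lemma segment_weight_ge0 (R : realType) n (A B Q : 'rV[R]_n) (a b : R) :
  in_simplex A -> in_simplex B -> in_simplex Q -> A != B ->
  a + b = 1 -> Q = a *: A + b *: B -> KL A Q = KL B Q -> 0 <= a.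
Proof.
move=> sA sB sQ AB ab QE AQ_BQ.
have sAB (i : 'I_2) : in_simplex [:: A; B]`_i by case: i => -[|[|]].
have := KL_compensation (c := fun i : 'I_2 => [:: a; b]`_i) sAB sQ sB.
rewrite !big_ord_recl !big_ord0 /= !addr0 KL_self mulr0 addr0 => /(_ QE) comp.
have KLAB_gt0 : 0 < KL A B.
  rewrite lt_neqAle eq_sym KL_ge0 // andbT; apply: contra_neq AB => KL0.
  by apply: KL_le0_eq; rewrite ?KL0.
rewrite -(pmulr_lge0 _ KLAB_gt0) comp -AQ_BQ -mulrDl ab mul1r.
by rewrite addr_ge0 ?KL_ge0.
Qed.

Section GeneralPosition.
Variables (R : realType) (m n : nat) (Phi : 'M[R]_(m.+1, n)).
Hypothesis gp : general_position Phi.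

Lemma general_position_affine_indep (c : 'I_m.+1 -> R) :
  \sum_i c i = 0 -> \sum_i c i *: row i Phi = 0 -> forall i, c i = 0.
Proof.
move=> c0 cPhi0.
pose M := \matrix_(i < m, j < n) (Phi (lift ord0 i) j - Phi ord0 j).
pose u : 'rV[R]_m := \row_i c (lift ord0 i).
have uM0 : u *m M = 0 *m M.
  rewrite mul0mx; apply/rowP => j; rewrite !mxE.
  have := congr1 (fun P : 'rV_n => P 0 j) cPhi0.
  rewrite summxE big_ord_recl !mxE.
  rewrite (eq_bigr (fun i => c (lift ord0 i) * Phi (lift ord0 i) j)) => [e|i _]; last first.
    by rewrite !mxE.
  rewrite (eq_bigr (fun i => c (lift ord0 i) * Phi (lift ord0 i) j
                             - c (lift ord0 i) * Phi ord0 j)); last first.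
    by move=> i _; rewrite /u /M !mxE mulrBr.
  rewrite sumrB -big_distrl /=.
  have -> : \sum_(i < m) c (lift ord0 i) = - c ord0 by move: c0; rewrite big_ord_recl; lra.
  by rewrite mulNr opprK addrC.
have u0 := row_free_inj gp uM0.
have c_lift (i : 'I_m) : c (lift ord0 i) = 0.
  by have /rowP/(_ i) := u0; rewrite /u !mxE.
have c_ord0 : c ord0 = 0.
  by move: c0; rewrite big_ord_recl big1 ?addr0.
by move=> i; case: (unliftP ord0 i) => [i'|] ->.
Qed.

Lemma general_position_row_inj : injective (fun i => row i Phi).
Proof.
move=> i k ik; apply/eqP; apply: contraT => i_neq_k.
have := @general_position_affine_indep (fun l => (l == i)%:R - (l == k)%:R) _ _ i.
rewrite eqxx (negbTE i_neq_k) subr0 => /(_ _ _)/eqP; rewrite oner_eq0; apply.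
  by rewrite sumrB !sum_dirac subrr.
by under eq_bigr do rewrite scalerBl; rewrite sumrB !sum_diracZ ik subrr.
Qed.

Lemma barycentric_unique (lam lam' : 'rV[R]_m.+1) (Q : 'rV[R]_n) :
  barycentric Phi lam Q -> barycentric Phi lam' Q -> lam = lam'.
Proof.
move=> [s QE] [s' QE']; apply/rowP => i; apply/eqP; rewrite -subr_eq0; apply/eqP.
apply: (@general_position_affine_indep (fun i => lam 0 i - lam' 0 i)).
  by rewrite sumrB s s' subrr.
by under eq_bigr do rewrite scalerBl; rewrite sumrB -QE -QE' subrr.
Qed.

End GeneralPosition.

Section Capacity.
Variables (R : realType) (m n : nat) (Phi : 'M[R]_(m, n)).
Hypothesis sPhi : forall i, in_simplex (row i Phi).

Lemma mutual_infoE (lam : 'rV[R]_m) :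
  mutual_info lam Phi = \sum_i lam 0 i * KL (row i Phi) (lam *m Phi).
Proof.
apply: eq_bigr => i _; rewrite big_distrr /=.
by apply: eq_bigr => j _; rewrite !mxE mulrA.
Qed.

Lemma csimplex_output (lam : 'rV[R]_m) : in_csimplex lam -> in_simplex (lam *m Phi).
Proof.
move=> [lam0 lam1]; have Phi0 i j : 0 < Phi i j by have := (sPhi i).1 j; rewrite mxE.
split=> [j|].
  have lamPhi_ge0 i : 0 <= lam 0 i * Phi i j by rewrite mulr_ge0 ?lam0 ?ltW.
  rewrite !mxE lt_neqAle sumr_ge0 ?andbT; last by move=> i _; exact: lamPhi_ge0.
  apply/negP => /eqP/esym/psumr_eq0P lamPhi0.
  have {}lamPhi0 := lamPhi0 (fun i _ => lamPhi_ge0 i).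
  suff : \sum_i lam 0 i = 0 by rewrite lam1 => /eqP; rewrite oner_eq0.
  apply: big1 => i _; have /eqP := lamPhi0 i isT.
  by rewrite mulf_eq0 (gt_eqF (Phi0 i j)) orbF => /eqP.
under eq_bigr do rewrite !mxE.
rewrite exchange_big /= -lam1; apply: eq_bigr => i _; rewrite -big_distrr /=.
suff -> : \sum_j Phi i j = 1 by rewrite mulr1.
by rewrite -(sPhi i).2; apply: eq_bigr => j _; rewrite mxE.
Qed.

Lemma mutual_info_le (lam : 'rV[R]_m) (Q : 'rV[R]_n) (D : R) :
  in_csimplex lam -> in_simplex Q -> (forall i, KL (row i Phi) Q <= D) ->
  mutual_info lam Phi <= D - KL (lam *m Phi) Q.
Proof.
move=> slam sQ KL_le.
have := KL_compensation (c := fun i => lam 0 i) sPhi (csimplex_output slam) sQ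
  (mulmx_sum_row lam Phi).
rewrite -mutual_infoE => comp.
suff : \sum_i lam 0 i * KL (row i Phi) Q <= D by lra.
rewrite -[D]mul1r -slam.2 big_distrl /=; apply: ler_sum => i _.
by apply: ler_wpM2l; [exact: slam.1 | exact: KL_le].
Qed.

Lemma capacity_characterization (lams : 'rV[R]_m) (D : R) :
  in_csimplex lams -> (forall i, KL (row i Phi) (lams *m Phi) <= D) ->
  mutual_info lams Phi = D ->
  [/\ capacity_achieving Phi lams,
      forall lam, capacity_achieving Phi lam -> lam *m Phi = lams *m Phi &
      capacity Phi = D].
Proof.
move=> slams KL_le MI.
have sQ := csimplex_output slams.
have MI_le lam : in_csimplex lam -> mutual_info lam Phi <= D.
  move=> slam; have := mutual_info_le slam sQ KL_le.
  have := KL_ge0 (csimplex_output slam) sQ; lra.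
split.
- by split=> // lam /MI_le; rewrite MI.
- move=> lam [slam lam_max]; apply: (KL_le0_eq (csimplex_output slam) sQ).
  have := lam_max _ slams; have := mutual_info_le slam sQ KL_le; lra.
- apply/eqP; rewrite eq_le; apply/andP; split.
    by apply: ge_sup => [|_ [lam slam <-]]; [exists D, lams | exact: MI_le].
  apply: ub_le_sup; last by exists lams.
  by exists D => _ [lam slam <-]; exact: MI_le.
Qed.

End Capacity.

Lemma big_ord4 (V : nmodType) (F : 'I_4 -> V) :
  \sum_i F i = F i1 + F i2 + F i3 + F i4.
Proof.
rewrite !big_ord_recl big_ord0 addr0 !addrA.
by congr (_ + _ + _ + _); congr F; apply: val_inj.
Qed.

Lemma affL2P (R : realType) n (A B Q : 'rV[R]_n) :
  affL [:: A; B] Q -> exists a b, a + b = 1 /\ Q = a *: A + b *: B.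
Proof.
case=> -[lam [lam1 ->]] _; move: lam1; rewrite !big_ord_recl !big_ord0 /= !addr0.
by exists (lam ord0), (lam (lift ord0 ord0)).
Qed.

Lemma affL3P (R : realType) n (A B C Q : 'rV[R]_n) :
  affL [:: A; B; C] Q -> exists a b c, a + b + c = 1 /\ Q = a *: A + b *: B + c *: C.
Proof.
case=> -[lam [lam1 ->]] _; move: lam1; rewrite !big_ord_recl !big_ord0 /= !addr0 !addrA.
by exists (lam ord0), (lam (lift ord0 ord0)), (lam (lift ord0 (lift ord0 ord0))).
Qed.

Section Theorem19.
Variables (R : realType) (n : nat) (Phi : 'M[R]_(4, n)) (Q0 Q1 Q2 : 'rV[R]_n).
Variables (lam0 lam1 : 'rV[R]_4).
Hypotheses (sPhi : forall i, in_simplex (row i Phi)) (gp : general_position Phi).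
Hypotheses (Q0_eq : equidistant Phi Q0) (Q0_bary : barycentric Phi lam0 Q0).
Hypotheses (lam01 : lam0 0 i1 < 0) (lam02 : 0 <= lam0 0 i2).
Hypothesis Q1_proj : is_proj (affL [:: row i2 Phi; row i3 Phi; row i4 Phi]) Q0 Q1.
Hypotheses (Q1_bary : barycentric Phi lam1 Q1) (lam12 : lam1 0 i2 < 0).
Hypothesis Q2_proj : is_proj (affL [:: row i3 Phi; row i4 Phi]) Q1 Q2.

Let sQ0 : in_simplex Q0 := Q0_eq.1.2.
Let sQ1 : in_simplex Q1 := Q1_proj.1.2.
Let sQ2 : in_simplex Q2 := Q2_proj.1.2.

Let C1 := KL (row i1 Phi) Q0 - KL Q1 Q0.
Let C2 := C1 - KL Q2 Q1.

Lemma KL_rows_Q1 i : i \in [:: i2; i3; i4] -> KL (row i Phi) Q1 = C1.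
Proof.
move=> i_in; rewrite /C1 (Q0_eq.2 i1 i) (proj_pythagoras _ sQ0 Q1_proj); first lra.
  by case=> -[|[|[|]]] // *; apply: sPhi.
exact: (map_f (fun j => row j Phi) i_in).
Qed.

Lemma KL_rows_Q2 i : i \in [:: i3; i4] -> KL (row i Phi) Q2 = C2.
Proof.
move=> i_in; rewrite /C2 -(KL_rows_Q1 (i := i)); last by move: i_in; rewrite !inE => /orP[]/eqP->.
rewrite (proj_pythagoras _ sQ1 Q2_proj); first lra.
  by case=> -[|[|]] // *; apply: sPhi.
exact: (map_f (fun j => row j Phi) i_in).
Qed.

Lemma lam1_i1 : lam1 0 i1 = 0.
Proof.
have [a [b [c [abc Q1E]]]] := affL3P Q1_proj.1.
have bary : barycentric Phi (\row_i [:: 0; a; b; c]`_i) Q1.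
  by split; rewrite big_ord4 !mxE /= ?scale0r add0r ?addrA.
by rewrite (barycentric_unique gp Q1_bary bary) mxE.
Qed.

Lemma KL_row2_Q2_le : KL (row i2 Phi) Q2 <= C2.
Proof.
have := KL_compensation (c := fun i => lam1 0 i) sPhi sQ1 sQ2 Q1_bary.2.
have := Q1_bary.1; rewrite !big_ord4 lam1_i1 !mul0r !add0r.
rewrite !KL_rows_Q1 // (KL_rows_Q2 (i := i3)) // (KL_rows_Q2 (i := i4)) //.
move=> lam_sum comp.
have key : lam1 0 i2 * (KL (row i2 Phi) Q2 - C2) = KL Q1 Q2 + KL Q2 Q1.
  have e4 : lam1 0 i4 = 1 - lam1 0 i2 - lam1 0 i3 by lra.
  by rewrite e4 /C2 in comp *; lra.
by rewrite -subr_le0 -(nmulr_rge0 _ lam12) key addr_ge0 ?KL_ge0.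
Qed.

Lemma KL_row1_Q2_le : KL (row i1 Phi) Q2 <= C2.
Proof.
have := KL_compensation (c := fun i => lam0 0 i) sPhi sQ0 sQ2 Q0_bary.2.
have := Q0_bary.1; rewrite !big_ord4.
rewrite -(Q0_eq.2 i1 i2) -(Q0_eq.2 i1 i3) -(Q0_eq.2 i1 i4).
rewrite (KL_rows_Q2 (i := i3)) // (KL_rows_Q2 (i := i4)) //.
move=> lam_sum comp.
have key : lam0 0 i1 * (KL (row i1 Phi) Q2 - C2) + lam0 0 i2 * (KL (row i2 Phi) Q2 - C2)
    = KL Q0 Q2 + KL Q1 Q0 + KL Q2 Q1.
  have e4 : lam0 0 i4 = 1 - lam0 0 i1 - lam0 0 i2 - lam0 0 i3 by lra.
  by rewrite e4 /C2 /C1 in comp *; lra.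
have le2 : lam0 0 i2 * (KL (row i2 Phi) Q2 - C2) <= 0.
  by rewrite mulr_ge0_le0 // subr_le0 KL_row2_Q2_le.
rewrite -subr_le0 -(nmulr_rge0 _ lam01).
have := KL_ge0 sQ0 sQ2; have := KL_ge0 sQ1 sQ0; have := KL_ge0 sQ2 sQ1; lra.
Qed.

Lemma KL_row4_Q2 : KL (row i4 Phi) Q2 = KL (row i3 Phi) Q2.
Proof. by rewrite !KL_rows_Q2. Qed.

Lemma KL_rows_Q2_le i : KL (row i Phi) Q2 <= KL (row i3 Phi) Q2.
Proof.
rewrite (KL_rows_Q2 (i := i3)) //.
case: i => -[|[|[|[|//]]]] lt_i4; rewrite (bool_irrelevance lt_i4 erefl).
- exact: KL_row1_Q2_le.
- exact: KL_row2_Q2_le.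
- by rewrite (KL_rows_Q2 (i := i3)).
- by rewrite (KL_rows_Q2 (i := i4)).
Qed.

Lemma Q2_segment : exists a b,
  [/\ 0 <= a, 0 <= b, a + b = 1 & Q2 = a *: row i3 Phi + b *: row i4 Phi].
Proof.
have [a [b [ab Q2E]]] := affL2P Q2_proj.1.
have P34 : row i3 Phi != row i4 Phi by apply/eqP => /(general_position_row_inj gp).
exists a, b; split => //.
  exact: segment_weight_ge0 (sPhi i3) (sPhi i4) sQ2 P34 ab Q2E (esym KL_row4_Q2).
rewrite addrC in ab; rewrite addrC in Q2E; rewrite eq_sym in P34.
exact: segment_weight_ge0 (sPhi i4) (sPhi i3) sQ2 P34 ab Q2E KL_row4_Q2.
Qed.

End Theorem19.

Theorem theorem19 (R : realType) (n : nat) (Phi : 'M[R]_(4, n))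
  (Q0 Q1 Q2 : 'rV[R]_n) (lam0 lam1 : 'rV[R]_4) :
  (forall i, in_simplex (row i Phi)) ->
  general_position Phi ->
  equidistant Phi Q0 ->
  barycentric Phi lam0 Q0 ->
  lam0 0 i1 < 0 -> 0 <= lam0 0 i2 -> 0 <= lam0 0 i3 -> 0 <= lam0 0 i4 ->
  is_proj (affL [:: row i2 Phi; row i3 Phi; row i4 Phi]) Q0 Q1 ->
  barycentric Phi lam1 Q1 ->
  lam1 0 i2 < 0 -> 0 <= lam1 0 i3 -> 0 <= lam1 0 i4 ->
  is_proj (affL [:: row i3 Phi; row i4 Phi]) Q1 Q2 ->
  (exists lam, capacity_achieving Phi lam) /\
  (forall lam, capacity_achieving Phi lam -> lam *m Phi = Q2) /\
  capacity Phi = KL (row i3 Phi) Q2.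
Proof.
move=> sPhi gp Q0_eq Q0_bary lam01 lam02 _ _ Q1_proj Q1_bary lam12 _ _ Q2_proj.
have [a [b [a0 b0 ab Q2E]]] := Q2_segment sPhi gp Q0_eq Q1_proj Q2_proj.
pose lams : 'rV[R]_4 := \row_i [:: 0; 0; a; b]`_i.
have lamsE : lams *m Phi = Q2.
  by rewrite mulmx_sum_row big_ord4 !mxE /= !scale0r !add0r.
have slams : in_csimplex lams.
  split=> [i|]; last by rewrite big_ord4 !mxE /= !add0r.
  by rewrite mxE; case: i => -[|[|[|[|]]]].
have KL_le i : KL (row i Phi) (lams *m Phi) <= KL (row i3 Phi) Q2.
  rewrite lamsE.
  exact: KL_rows_Q2_le sPhi gp Q0_eq Q0_bary lam01 lam02 Q1_proj Q1_bary lam12 Q2_proj i.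
have MI : mutual_info lams Phi = KL (row i3 Phi) Q2.
  rewrite mutual_infoE big_ord4 !mxE /= lamsE !mul0r !add0r.
  by rewrite (KL_row4_Q2 sPhi Q0_eq Q1_proj Q2_proj) -mulrDl ab mul1r.
have [lams_max lams_unique ->] := capacity_characterization sPhi slams KL_le MI.
by split; [exists lams | split=> // lam /lams_unique; rewrite lamsE].
Qed.
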